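(* Let $(W_n)_{n\in\omega}$ be a standard numbering of the c.e. subsets of $\omega$, $\langle\cdot,\cdot\rangle$ a computable pairing bijection, and $V_n=\{(i,j)\mid\langle i,j\rangle\in W_n\}$. Let $\mathbf{T}$, $\mathbf{P}$, $\mathbf{O}$ be the classes of all c.e. transitive relations, all c.e. preorders, and all c.e. partial orders on $\omega$, respectively. Then: (1) there is a computable function $t$ such that for all $m,n$: $V_{t(n)}\in\mathbf{T}$; $V_n\in\mathbf{T}$ implies $V_n=V_{t(n)}$; and $V_m=V_n$ implies $V_{t(m)}=V_{t(n)}$. (2) There is a computable function $p$ such that for all $m,n$: $V_{p(n)}\in\mathbf{P}$; $V_n\in\mathbf{P}$ implies $V_n=V_{p(n)}$; and $V_m=V_n$ implies $V_{p(m)}=V_{p(n)}$. (3) There is a computable function $o$ such that for all $n$: $V_{o(n)}\in\mathbf{O}$, and $V_n\in\mathbf{O}$ implies $V_n=V_{o(n)}$. *)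

From Stdlib Require Import Arith.

Definition cpair (i j : nat) : nat := (i + j) * (i + j + 1) / 2 + j.

(* its inverse, by enumeration along the diagonals *)
Fixpoint unpair (n : nat) : nat * nat :=
  match n with
  | 0 => (0, 0)
  | S n' => let (i, j) := unpair n' in
            match i with
            | 0 => (S j, 0)
            | S i' => (i', S j)
            end
  end.

(* Codes of unary partial recursive functions (a complete basis:
   zero, successor, unpairing projections, composition, pairing,
   primitive recursion with parameter, unbounded minimisation). *)
Inductive code : Type :=
| CZero | CSucc | CFst | CSnd
| CComp (f g : code)
| CPair (f g : code)
| CRec (f g : code)
| CMu (f : code).

Inductive eval : code -> nat -> nat -> Prop :=
| ev_zero x : eval CZero x 0
| ev_succ x : eval CSucc x (S x)
| ev_fst x : eval CFst x (fst (unpair x))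
| ev_snd x : eval CSnd x (snd (unpair x))
| ev_comp f g x y z : eval g x y -> eval f y z -> eval (CComp f g) x z
| ev_pair f g x y z : eval f x y -> eval g x z -> eval (CPair f g) x (cpair y z)
| ev_rec0 f g a y : eval f a y -> eval (CRec f g) (cpair a 0) y
| ev_recS f g a n z y :
    eval (CRec f g) (cpair a n) z -> eval g (cpair a (cpair n z)) y ->
    eval (CRec f g) (cpair a (S n)) y
| ev_mu f x y : mu_search f x 0 y -> eval (CMu f) x y
with mu_search : code -> nat -> nat -> nat -> Prop :=
| ms_found f x k : eval f (cpair x k) 0 -> mu_search f x k k
| ms_next f x k v y :
    eval f (cpair x k) (S v) -> mu_search f x (S k) y -> mu_search f x k y.

Fixpoint decode_fuel (fuel n : nat) : code :=
  match fuel with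
  | 0 => CZero
  | S fuel' =>
    let r := n / 8 in
    let a := fst (unpair r) in
    let b := snd (unpair r) in
    match n mod 8 with
    | 0 => CZero
    | 1 => CSucc
    | 2 => CFst
    | 3 => CSnd
    | 4 => CComp (decode_fuel fuel' a) (decode_fuel fuel' b)
    | 5 => CPair (decode_fuel fuel' a) (decode_fuel fuel' b)
    | 6 => CRec (decode_fuel fuel' a) (decode_fuel fuel' b)
    | _ => CMu (decode_fuel fuel' r)
    end
  end.

Definition decode (n : nat) : code := decode_fuel n n.

Definition phi (e x y : nat) : Prop := eval (decode e) x y.

Definition W (e x : nat) : Prop := exists y, phi e x y.

Definition V (e : nat) (i j : nat) : Prop := W e (cpair i j).

Definition computable (f : nat -> nat) : Prop :=
  exists e, forall x, phi e x (f x).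

Definition rel_eq (R S : nat -> nat -> Prop) : Prop :=
  forall i j, R i j <-> S i j.

Definition transitive_rel (R : nat -> nat -> Prop) : Prop :=
  forall a b c, R a b -> R b c -> R a c.
Definition reflexive_rel (R : nat -> nat -> Prop) : Prop := forall a, R a a.
Definition antisymmetric_rel (R : nat -> nat -> Prop) : Prop :=
  forall a b, R a b -> R b a -> a = b.

(* membership of V_e in the classes T, P, O (V_e is always c.e.) *)
Definition in_T (e : nat) : Prop := transitive_rel (V e).
Definition in_P (e : nat) : Prop := reflexive_rel (V e) /\ transitive_rel (V e).
Definition in_O (e : nat) : Prop :=
  reflexive_rel (V e) /\ transitive_rel (V e) /\ antisymmetric_rel (V e).

(* Approximate V_n by the stages V_{n,s}: the pairs (a,b) with a, b <= s such
   that <a,b> enters W_n within s steps of a universal machine.  The stages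
   increase with s and exhaust V_n.  Then t(n) enumerates the pairs joined by a
   path in some stage, i.e. the transitive closure of V_n, and p(n) adds the
   diagonal.  o(n) enumerates the diagonal together with the paths of those
   stages whose transitive closure has no cycle through two distinct points:
   since paths persist into later stages, two such paths can always be read in
   the later of their two stages, which is acyclic, so the result is a partial
   order; and if V_n is already a partial order, no stage has such a cycle.
   Each of these relations is {x | exists k, c<<n,x>,k> = 0} for a primitive
   recursive c, written in a small expression language that compiles into the
   given codes, so an index for it is computable from n. *)

From Stdlib Require Import Arith Lia List ListDec.
Import ListNotations.

Arguments cpair : simpl never.
Arguments unpair : simpl never.

Lemma unpair_S n : unpair (S n) =
  let (i, j) := unpair n in match i with 0 => (S j, 0) | S i' => (i', S j) end.
Proof. reflexivity. Qed.

Lemma cpair_S_0 j : cpair (S j) 0 = S (cpair 0 j).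
Proof.
  unfold cpair. rewrite !Nat.add_0_r. simpl (0 + j).
  replace (S j * (S j + 1)) with (j * (j + 1) + (j + 1) * 2) by lia.
  rewrite Nat.div_add by lia. lia.
Qed.

Lemma cpair_S_r i j : cpair i (S j) = S (cpair (S i) j).
Proof. unfold cpair. replace (i + S j) with (S i + j) by lia. lia. Qed.

Lemma cpair_unpair n : cpair (fst (unpair n)) (snd (unpair n)) = n.
Proof.
  induction n as [|n IH]; [reflexivity|].
  rewrite unpair_S. destruct (unpair n) as [[|i] j]; cbn in *.
  - rewrite cpair_S_0, IH. reflexivity.
  - rewrite cpair_S_r, IH. reflexivity.
Qed.

Lemma unpair_cpair i j : unpair (cpair i j) = (i, j).
Proof.
  remember (i + j) as s eqn:Hs. revert i j Hs.
  induction s as [s IHs] using lt_wf_ind. intros i j Hs.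
  revert i Hs. induction j as [|j IHj]; intros i Hs.
  - destruct i as [|i]; [reflexivity|].
    rewrite cpair_S_0, unpair_S, (IHs i) by lia. reflexivity.
  - rewrite cpair_S_r, unpair_S, (IHj (S i)) by lia. reflexivity.
Qed.

Ltac simpl_unpair := repeat (first [rewrite unpair_cpair | rewrite Nat.pred_succ]; cbn [fst snd]).
Ltac simpl_unpair_in H :=
  repeat (first [rewrite unpair_cpair in H | rewrite Nat.pred_succ in H]; cbn [fst snd] in H).

Lemma cpair_inj a b c d : cpair a b = cpair c d -> a = c /\ b = d.
Proof.
  intro H. pose proof (unpair_cpair a b) as E. rewrite H, unpair_cpair in E.
  injection E. auto.
Qed.

Lemma cpair_surj n : exists a b, n = cpair a b.
Proof. exists (fst (unpair n)), (snd (unpair n)). symmetry. apply cpair_unpair. Qed.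

Lemma unpair_le n : fst (unpair n) + snd (unpair n) <= n.
Proof.
  induction n as [|n IH]; [reflexivity|].
  rewrite unpair_S. destruct (unpair n) as [[|i] j]; cbn in *; lia.
Qed.

Lemma cpair_le_r i j : j <= cpair i j.
Proof. pose proof (unpair_le (cpair i j)) as H. rewrite unpair_cpair in H. cbn in H. lia. Qed.

Lemma cpair_le_mono i j i' j' : i <= i' -> j <= j' -> cpair i j <= cpair i' j'.
Proof.
  intros. unfold cpair.
  assert ((i + j) * (i + j + 1) / 2 <= (i' + j') * (i' + j' + 1) / 2)
    by (apply Nat.Div0.div_le_mono, Nat.mul_le_mono; lia).
  lia.
Qed.

(** * Primitive recursive expressions *)

Inductive expr : Type :=
| Var | Zero
| Succ (a : expr) | Pred (a : expr)
| Pair (a b : expr) | Fst (a : expr) | Snd (a : expr)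
| Comp (a b : expr)
| IfZ (c a b : expr)
| Iter (body init count : expr).

Fixpoint den (e : expr) (x : nat) : nat :=
  match e with
  | Var => x
  | Zero => 0
  | Succ a => S (den a x)
  | Pred a => pred (den a x)
  | Pair a b => cpair (den a x) (den b x)
  | Fst a => fst (unpair (den a x))
  | Snd a => snd (unpair (den a x))
  | Comp a b => den a (den b x)
  | IfZ c a b => match den c x with 0 => den a x | S _ => den b x end
  | Iter body init count =>
      Nat.iter (den count x) (fun st => den body (cpair x st)) (den init x)
  end.

Lemma den_Iter body init count x (g : nat -> nat) :
  (forall st, den body (cpair x st) = g st) ->
  den (Iter body init count) x = Nat.iter (den count x) g (den init x).
Proof.
  intro Hg. cbn [den]. generalize (den count x) as n.
  induction n as [|n IH]; [reflexivity|]. rewrite !Nat.iter_succ, IH. apply Hg.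
Qed.

Definition code_id : code := CPair CFst CSnd.

Fixpoint compile (e : expr) : code :=
  match e with
  | Var => code_id
  | Zero => CZero
  | Succ a => CComp CSucc (compile a)
  | Pred a => CComp (CRec CZero (CComp CFst CSnd)) (CPair code_id (compile a))
  | Pair a b => CPair (compile a) (compile b)
  | Fst a => CComp CFst (compile a)
  | Snd a => CComp CSnd (compile a)
  | Comp a b => CComp (compile a) (compile b)
  | IfZ c a b =>
      CComp (CRec (compile a) (CComp (compile b) CFst)) (CPair code_id (compile c))
  | Iter body init count =>
      CComp (CRec CSnd (CComp (compile body) (CPair (CComp CFst CFst) (CComp CSnd CSnd))))
            (CPair (CPair code_id (compile init)) (compile count))
  end.

Lemma eval_id x : eval code_id x x.
Proof. rewrite <- (cpair_unpair x) at 2. repeat constructor. Qed.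

Fixpoint prim_rec (F G : nat -> nat) (a n : nat) : nat :=
  match n with 0 => F a | S n => G (cpair a (cpair n (prim_rec F G a n))) end.

Lemma eval_CRec f g F G : (forall x, eval f x (F x)) -> (forall x, eval g x (G x)) ->
  forall a n, eval (CRec f g) (cpair a n) (prim_rec F G a n).
Proof. intros Hf Hg a n. induction n; econstructor; eauto. Qed.

Lemma eval_compile e x : eval (compile e) x (den e x).
Proof.
  revert x. induction e; intro x; cbn [compile].
  - apply eval_id.
  - constructor.
  - econstructor; [eauto|constructor].
  - econstructor; [constructor; [apply eval_id|apply IHe]|]. cbn [den].
    replace (pred (den e x)) with
      (prim_rec (fun _ => 0) (fun y => fst (unpair (snd (unpair y)))) x (den e x))
      by (destruct (den e x); cbn; simpl_unpair; reflexivity).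
    apply eval_CRec; intro; repeat econstructor.
  - constructor; auto.
  - econstructor; [eauto|constructor].
  - econstructor; [eauto|constructor].
  - econstructor; eauto.
  - econstructor; [constructor; [apply eval_id|apply IHe1]|]. cbn [den].
    replace (match den e1 x with 0 => den e2 x | S _ => den e3 x end) with
      (prim_rec (den e2) (fun y => den e3 (fst (unpair y))) x (den e1 x))
      by (destruct (den e1 x); cbn; simpl_unpair; reflexivity).
    apply eval_CRec; [auto|]. intro. econstructor; [constructor|apply IHe3].
  - econstructor; [constructor; [constructor; [apply eval_id|apply IHe2]|apply IHe3]|].
    set (G := fun y => den e1 (cpair (fst (unpair (fst (unpair y))))
                                     (snd (unpair (snd (unpair y)))))).
    replace (den (Iter e1 e2 e3) x) with
      (prim_rec (fun y => snd (unpair y)) G (cpair x (den e2 x)) (den e3 x)).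
    + apply eval_CRec; [constructor|]. intro y. econstructor; [|apply IHe1].
      constructor; repeat econstructor.
    + cbn [den]. induction (den e3 x) as [|n IHn]; cbn [prim_rec Nat.iter nat_rect].
      * simpl_unpair. reflexivity.
      * unfold G at 1. simpl_unpair. rewrite IHn. reflexivity.
Qed.

Fixpoint Num (m : nat) : expr := match m with 0 => Zero | S m => Succ (Num m) end.

Lemma den_Num m x : den (Num m) x = m.
Proof. induction m; cbn; auto. Qed.

Definition LetIn (a body : expr) : expr := Comp body (Pair Var a).

Lemma den_LetIn a body x : den (LetIn a body) x = den body (cpair x (den a x)).
Proof. reflexivity. Qed.

Definition Plus (a b : expr) : expr := Iter (Succ (Snd Var)) a b.
Definition Minus (a b : expr) : expr := Iter (Pred (Snd Var)) a b.

Lemma den_Plus a b x : den (Plus a b) x = den a x + den b x.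
Proof.
  unfold Plus. rewrite (den_Iter _ _ _ _ S) by (intro; cbn; simpl_unpair; reflexivity).
  induction (den b x) as [|n IH]; [cbn; lia|]. rewrite Nat.iter_succ, IH. lia.
Qed.

Lemma den_Minus a b x : den (Minus a b) x = den a x - den b x.
Proof.
  unfold Minus. rewrite (den_Iter _ _ _ _ pred) by (intro; cbn; simpl_unpair; reflexivity).
  induction (den b x) as [|n IH]; [cbn; lia|]. rewrite Nat.iter_succ, IH. lia.
Qed.

(* An expression used as a test holds when it evaluates to 0. *)
Definition Equal (a b : expr) : expr := Plus (Minus a b) (Minus b a).
Definition And : expr -> expr -> expr := Plus.
Definition Or (a b : expr) : expr := IfZ a Zero b.
Definition Not (a : expr) : expr := IfZ a (Num 1) Zero.

Lemma den_Equal a b x : den (Equal a b) x = 0 <-> den a x = den b x.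
Proof. unfold Equal. rewrite den_Plus, !den_Minus. lia. Qed.

Lemma den_And a b x : den (And a b) x = 0 <-> den a x = 0 /\ den b x = 0.
Proof. unfold And. rewrite den_Plus. lia. Qed.

Lemma den_Or a b x : den (Or a b) x = 0 <-> den a x = 0 \/ den b x = 0.
Proof. cbn. destruct (den a x); intuition discriminate. Qed.

Lemma den_Not a x : den (Not a) x = 0 <-> den a x <> 0.
Proof. cbn. destruct (den a x); intuition discriminate. Qed.

Fixpoint Case (d : expr) (branches : list expr) (default : expr) : expr :=
  match branches with
  | [] => default
  | b :: bs => IfZ d b (Case (Pred d) bs default)
  end.

Lemma den_Case d bs default x :
  den (Case d bs default) x = nth (den d x) (map (fun b => den b x) bs) (den default x).
Proof.
  revert d. induction bs as [|b bs IH]; intro d; cbn [Case map].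
  - destruct (den d x); reflexivity.
  - cbn [den]. rewrite IH. cbn [den]. destruct (den d x); reflexivity.
Qed.

Lemma decode_fuel_enough f1 f2 n : n <= f1 -> n <= f2 ->
  decode_fuel f1 n = decode_fuel f2 n.
Proof.
  revert f2 n. induction f1 as [|f1 IH]; intros f2 n H1 H2.
  - replace n with 0 by lia. destruct f2; reflexivity.
  - destruct n as [|n]; [destruct f2; reflexivity|].
    destruct f2 as [|f2]; [lia|].
    assert (S n / 8 < S n) by (apply Nat.div_lt; lia).
    pose proof (unpair_le (S n / 8)).
    cbn [decode_fuel].
    destruct (S n mod 8) as [|[|[|[|[|[|[|]]]]]]]; try reflexivity;
      f_equal; apply IH; lia.
Qed.

Definition decode_node (n : nat) : code :=
  let r := n / 8 in
  match n mod 8 with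
  | 0 => CZero | 1 => CSucc | 2 => CFst | 3 => CSnd
  | 4 => CComp (decode (fst (unpair r))) (decode (snd (unpair r)))
  | 5 => CPair (decode (fst (unpair r))) (decode (snd (unpair r)))
  | 6 => CRec (decode (fst (unpair r))) (decode (snd (unpair r)))
  | _ => CMu (decode r)
  end.

Lemma decode_unfold n : decode n = decode_node n.
Proof.
  unfold decode_node, decode. destruct n as [|n]; [reflexivity|].
  assert (S n / 8 < S n) by (apply Nat.div_lt; lia).
  pose proof (unpair_le (S n / 8)).
  cbn [decode_fuel].
  destruct (S n mod 8) as [|[|[|[|[|[|[|]]]]]]]; try reflexivity;
    f_equal; apply decode_fuel_enough; lia.
Qed.

Lemma decode_inv e c : decode e = c ->
  match c with
  | CZero => e mod 8 = 0 | CSucc => e mod 8 = 1 | CFst => e mod 8 = 2 | CSnd => e mod 8 = 3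
  | CComp f g => e mod 8 = 4 /\ decode (fst (unpair (e / 8))) = f /\ decode (snd (unpair (e / 8))) = g
  | CPair f g => e mod 8 = 5 /\ decode (fst (unpair (e / 8))) = f /\ decode (snd (unpair (e / 8))) = g
  | CRec f g => e mod 8 = 6 /\ decode (fst (unpair (e / 8))) = f /\ decode (snd (unpair (e / 8))) = g
  | CMu f => e mod 8 = 7 /\ decode (e / 8) = f
  end.
Proof.
  rewrite decode_unfold. unfold decode_node. intros <-.
  pose proof (Nat.mod_upper_bound e 8 ltac:(lia)).
  destruct (e mod 8) as [|[|[|[|[|[|[|[|]]]]]]]]; auto; lia.
Qed.

Fixpoint encode (c : code) : nat :=
  match c with
  | CZero => 0 | CSucc => 1 | CFst => 2 | CSnd => 3
  | CComp f g => 8 * cpair (encode f) (encode g) + 4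
  | CPair f g => 8 * cpair (encode f) (encode g) + 5
  | CRec f g => 8 * cpair (encode f) (encode g) + 6
  | CMu f => 8 * encode f + 7
  end.

Lemma div_8_add q r : r < 8 -> (8 * q + r) / 8 = q.
Proof. intro. symmetry. apply (Nat.div_unique _ 8 q r); lia. Qed.

Lemma mod_8_add q r : r < 8 -> (8 * q + r) mod 8 = r.
Proof. intro. symmetry. apply (Nat.mod_unique _ 8 q r); lia. Qed.

Lemma decode_encode c : decode (encode c) = c.
Proof.
  induction c; try reflexivity; rewrite decode_unfold; unfold decode_node; cbn [encode];
    rewrite ?mod_8_add, ?div_8_add by lia; cbv iota beta zeta; simpl_unpair; congruence.
Qed.

Scheme eval_mut := Induction for eval Sort Prop
with mu_search_mut := Induction for mu_search Sort Prop.

Ltac use_det_IH := subst; repeat match goal with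
  | IH : forall y2, eval ?c ?x y2 -> ?a = y2, H : eval ?c ?x ?b |- _ =>
      apply IH in H; subst
  | IH : forall y2, mu_search ?c ?x ?k y2 -> ?a = y2, H : mu_search ?c ?x ?k ?b |- _ =>
      apply IH in H; subst
  | H : cpair _ _ = cpair _ _ |- _ => apply cpair_inj in H as [? ?]; subst
  | H : S _ = S _ |- _ => injection H as H; subst
  end; auto; try discriminate; try lia.

Lemma eval_det c x y1 y2 : eval c x y1 -> eval c x y2 -> y1 = y2.
Proof.
  intro H. revert y2. revert c x y1 H.
  apply (eval_mut (fun c x y1 _ => forall y2, eval c x y2 -> y1 = y2)
                  (fun f x k y1 _ => forall y2, mu_search f x k y2 -> y1 = y2));
    intros until y2; intro Hy2; inversion Hy2; use_det_IH.
Qed.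

Lemma eval_CMu_iff f F x : (forall z, eval f z (F z)) ->
  (exists y, eval (CMu f) x y) <-> exists k, F (cpair x k) = 0.
Proof.
  intro HF. split.
  - intros [y Hy]. inversion Hy as [| | | | | | | |? ? ? Hs]; subst. exists y.
    clear Hy. remember 0 as j in Hs. clear Heqj.
    induction Hs; [eapply eval_det; eauto|auto].
  - intros [k Hk]. enough (Hs : forall d j, j + d = k -> exists y, mu_search f x j y).
    { destruct (Hs k 0 eq_refl) as [y Hy]. exists y. constructor. auto. }
    induction d as [|d IH]; intros j Hj.
    + exists j. constructor. rewrite <- Hk, <- Hj, Nat.add_0_r. auto.
    + destruct (F (cpair x j)) as [|v] eqn:E.
      * exists j. constructor. rewrite <- E. auto.
      * destruct (IH (S j)) as [y Hy]; [lia|].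
        exists y. econstructor; [rewrite <- E; auto|auto].
Qed.

(** * A universal machine *)

Definition DivMod8 (a : expr) : expr :=
  Iter (IfZ (Minus (Snd (Snd Var)) (Num 6))
           (Pair (Fst (Snd Var)) (Succ (Snd (Snd Var))))
           (Pair (Succ (Fst (Snd Var))) Zero))
       (Pair Zero Zero) a.

Lemma den_DivMod8 a x : den (DivMod8 a) x = cpair (den a x / 8) (den a x mod 8).
Proof.
  unfold DivMod8.
  rewrite (den_Iter _ _ _ _ (fun st => if snd (unpair st) - 6 =? 0
     then cpair (fst (unpair st)) (S (snd (unpair st)))
     else cpair (S (fst (unpair st))) 0))
    by (intro; cbn [den]; rewrite den_Minus; cbn [den]; simpl_unpair; rewrite den_Num;
        destruct (_ - 6); reflexivity).
  cbn [den]. induction (den a x) as [|n IH]; [reflexivity|].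
  rewrite Nat.iter_succ, IH. simpl_unpair.
  pose proof (Nat.div_mod_eq n 8). pose proof (Nat.mod_upper_bound n 8 ltac:(lia)).
  destruct (Nat.eqb_spec (n mod 8 - 6) 0).
  - replace (S n) with (8 * (n / 8) + S (n mod 8)) by lia.
    rewrite div_8_add, mod_8_add by lia. reflexivity.
  - replace (S n) with (8 * S (n / 8) + 0) by lia.
    rewrite div_8_add, mod_8_add by lia. reflexivity.
Qed.

(* Machine states: <0,<e,<x,K>>> runs code number e on x and passes the result
   to the continuation K; <m+1,<v,K>> returns v to K.  A continuation is a stack
   of frames <t,<p,K>> with tag 0 for the empty stack; k_rec g a i m K has yet to
   apply g m times, the next time at index i. *)
Definition st_eval (e x K : nat) : nat := cpair 0 (cpair e (cpair x K)).
Definition st_ret_at (m v K : nat) : nat := cpair (S m) (cpair v K).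
Notation st_ret := (st_ret_at 0).
Definition frame (t p K : nat) : nat := cpair t (cpair p K).
Definition k_comp f K := frame 1 f K.
Definition k_pair1 g x K := frame 2 (cpair g x) K.
Definition k_pair2 y K := frame 3 y K.
Definition k_rec g a i m K := frame 4 (cpair g (cpair a (cpair i m))) K.
Definition k_mu f x k K := frame 5 (cpair f (cpair x k)) K.

Definition EvalSt (e x K : expr) : expr := Pair Zero (Pair e (Pair x K)).
Definition RetSt (v K : expr) : expr := Pair (Num 1) (Pair v K).
Definition Frame (t : nat) (p K : expr) : expr := Pair (Num t) (Pair p K).

Definition eval_branch : expr :=
  LetIn (DivMod8 (Fst (Snd Var)))
    (let st := Fst Var in
     let x := Fst (Snd (Snd st)) in
     let K := Snd (Snd (Snd st)) in
     let q := Fst (Snd Var) in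
     let f := Fst q in
     let g := Snd q in
     Case (Snd (Snd Var))
       [ RetSt Zero K;
         RetSt (Succ x) K;
         RetSt (Fst x) K;
         RetSt (Snd x) K;
         EvalSt g x (Frame 1 f K);
         EvalSt f x (Frame 2 (Pair g x) K);
         EvalSt f (Fst x) (Frame 4 (Pair g (Pair (Fst x) (Pair Zero (Snd x)))) K) ]
       (EvalSt q (Pair x Zero) (Frame 5 (Pair q (Pair x Zero)) K))).

(* The empty continuation and unused tags leave the state unchanged. *)
Definition return_branch : expr :=
  let v := Fst (Snd Var) in
  let K := Snd (Snd Var) in
  let p := Fst (Snd K) in
  let K' := Snd (Snd K) in
  Case (Fst K)
    [ Var;
      EvalSt p v K';
      EvalSt (Fst p) (Snd p) (Frame 3 v K');
      RetSt (Pair p v) K';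
      (let g := Fst p in
       let a := Fst (Snd p) in
       let i := Fst (Snd (Snd p)) in
       let m := Snd (Snd (Snd p)) in
       IfZ m (RetSt v K')
         (EvalSt g (Pair a (Pair i v))
            (Frame 4 (Pair g (Pair a (Pair (Succ i) (Pred m)))) K')));
      (let f := Fst p in
       let x := Fst (Snd p) in
       let k := Snd (Snd p) in
       IfZ v (RetSt k K')
         (EvalSt f (Pair x (Succ k)) (Frame 5 (Pair f (Pair x (Succ k))) K'))) ]
    Var.

Definition step_expr : expr := IfZ (Fst Var) eval_branch return_branch.
Definition step : nat -> nat := den step_expr.

Ltac unfold_machine :=
  unfold step, step_expr, eval_branch, return_branch, LetIn, EvalSt, RetSt, Frame,
    st_ret_at, st_eval, k_comp, k_pair1, k_pair2, k_rec, k_mu, frame;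
  cbn [den Num]; rewrite ?den_DivMod8, ?den_Case; cbn [den map]; simpl_unpair.

Lemma step_eval e x K : step (st_eval e x K) =
  let q := e / 8 in
  match e mod 8 with
  | 0 => st_ret 0 K
  | 1 => st_ret (S x) K
  | 2 => st_ret (fst (unpair x)) K
  | 3 => st_ret (snd (unpair x)) K
  | 4 => st_eval (snd (unpair q)) x (k_comp (fst (unpair q)) K)
  | 5 => st_eval (fst (unpair q)) x (k_pair1 (snd (unpair q)) x K)
  | 6 => st_eval (fst (unpair q)) (fst (unpair x))
                 (k_rec (snd (unpair q)) (fst (unpair x)) 0 (snd (unpair x)) K)
  | _ => st_eval q (cpair x 0) (k_mu q x 0 K)
  end.
Proof.
  unfold_machine.
  pose proof (Nat.mod_upper_bound e 8 ltac:(lia)).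
  destruct (e mod 8) as [|[|[|[|[|[|[|[|]]]]]]]]; try lia; reflexivity.
Qed.

Lemma step_stuck m v t p K : t = 0 \/ 6 <= t ->
  step (st_ret_at m v (frame t p K)) = st_ret_at m v (frame t p K).
Proof.
  intro Ht. unfold_machine.
  destruct t as [|[|[|[|[|[|[|]]]]]]]; try lia; reflexivity.
Qed.

Lemma step_ret_comp m v f K : step (st_ret_at m v (k_comp f K)) = st_eval f v K.
Proof. unfold_machine. reflexivity. Qed.

Lemma step_ret_pair1 m v g x K :
  step (st_ret_at m v (k_pair1 g x K)) = st_eval g x (k_pair2 v K).
Proof. unfold_machine. reflexivity. Qed.

Lemma step_ret_pair2 m v y K : step (st_ret_at m v (k_pair2 y K)) = st_ret (cpair y v) K.
Proof. unfold_machine. reflexivity. Qed.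

Lemma step_ret_rec_0 m v g a i K : step (st_ret_at m v (k_rec g a i 0 K)) = st_ret v K.
Proof. unfold_machine. reflexivity. Qed.

Lemma step_ret_rec_S m v g a i n K :
  step (st_ret_at m v (k_rec g a i (S n) K)) =
  st_eval g (cpair a (cpair i v)) (k_rec g a (S i) n K).
Proof. unfold_machine. reflexivity. Qed.

Lemma step_ret_mu_0 m f x k K : step (st_ret_at m 0 (k_mu f x k K)) = st_ret k K.
Proof. unfold_machine. reflexivity. Qed.

Lemma step_ret_mu_S m v f x k K :
  step (st_ret_at m (S v) (k_mu f x k K)) = st_eval f (cpair x (S k)) (k_mu f x (S k) K).
Proof. unfold_machine. reflexivity. Qed.

(** * Correctness of the machine *)

Definition reach (a b : nat) : Prop := exists s, Nat.iter s step a = b.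

Lemma reach_refl a : reach a a.
Proof. exists 0. reflexivity. Qed.

Lemma reach_trans a b c : reach a b -> reach b c -> reach a c.
Proof. intros [s1 H1] [s2 H2]. exists (s2 + s1). rewrite Nat.iter_add, H1. exact H2. Qed.

Lemma reach_step a b : reach (step a) b -> reach a b.
Proof. intros [s H]. exists (S s). rewrite Nat.iter_succ_r. exact H. Qed.

Definition reaches (c : code) (x y : nat) : Prop :=
  forall e K, decode e = c -> reach (st_eval e x K) (st_ret y K).

(* For h := CRec f g with h<a,n> = y; generalized over the m steps still pending
   after h<a,n> so that it follows by induction on n. *)
Definition rec_tail (c : code) (x y : nat) : Prop :=
  match c with
  | CRec f g =>
      let a := fst (unpair x) in
      let n := snd (unpair x) in
      forall ef eg m K, decode ef = f -> decode eg = g ->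
      reach (st_eval ef a (k_rec eg a 0 (n + m) K)) (st_ret y (k_rec eg a n m K))
  | _ => True
  end.

Definition mu_reaches (f : code) (x k y : nat) : Prop :=
  forall ef K, decode ef = f -> reach (st_eval ef (cpair x k) (k_mu ef x k K)) (st_ret y K).

Lemma reaches_CComp f g x y z : reaches g x y -> reaches f y z -> reaches (CComp f g) x z.
Proof.
  intros Hg Hf e K (Hm & He1 & He2)%decode_inv.
  apply reach_step. rewrite step_eval, Hm. cbv zeta iota.
  eapply reach_trans; [apply Hg; exact He2|].
  apply reach_step. rewrite step_ret_comp. apply Hf. exact He1.
Qed.

Lemma reaches_CPair f g x y z :
  reaches f x y -> reaches g x z -> reaches (CPair f g) x (cpair y z).
Proof.
  intros Hf Hg e K (Hm & He1 & He2)%decode_inv.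
  apply reach_step. rewrite step_eval, Hm. cbv zeta iota.
  eapply reach_trans; [apply Hf; exact He1|].
  apply reach_step. rewrite step_ret_pair1.
  eapply reach_trans; [apply Hg; exact He2|].
  apply reach_step. rewrite step_ret_pair2. apply reach_refl.
Qed.

Lemma reaches_CRec f g x y : rec_tail (CRec f g) x y -> reaches (CRec f g) x y.
Proof.
  intros H e K (Hm & Hf & Hg)%decode_inv.
  apply reach_step. rewrite step_eval, Hm. cbv zeta iota.
  eapply reach_trans.
  - specialize (H _ _ 0 K Hf Hg). rewrite Nat.add_0_r in H. exact H.
  - apply reach_step. rewrite step_ret_rec_0. apply reach_refl.
Qed.

Lemma reaches_CMu f x y : mu_reaches f x 0 y -> reaches (CMu f) x y.
Proof.
  intros H e K (Hm & Hf)%decode_inv.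
  apply reach_step. rewrite step_eval, Hm. cbv zeta iota. apply H. exact Hf.
Qed.

Lemma eval_reaches c x y : eval c x y -> reaches c x y /\ rec_tail c x y.
Proof.
  revert c x y.
  apply (eval_mut (fun c x y _ => reaches c x y /\ rec_tail c x y)
                  (fun f x k y _ => mu_reaches f x k y)); cbn [rec_tail].
  1-4: split; [|exact I]; intros e K He%decode_inv;
       apply reach_step; rewrite step_eval, He; apply reach_refl.
  - intros f g x y z _ [Hg _] _ [Hf _]. split; [exact (reaches_CComp _ _ _ _ _ Hg Hf)|exact I].
  - intros f g x y z _ [Hf _] _ [Hg _]. split; [exact (reaches_CPair _ _ _ _ _ Hf Hg)|exact I].
  - intros f g a y _ [Hf _].
    assert (Ht : rec_tail (CRec f g) (cpair a 0) y).
    { cbn. simpl_unpair. intros ef eg m K <- <-. apply Hf. reflexivity. }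
    split; [apply reaches_CRec|]; exact Ht.
  - intros f g a n z y _ [_ Hrec] _ [Hg _]. cbn in Hrec. simpl_unpair_in Hrec.
    assert (Ht : rec_tail (CRec f g) (cpair a (S n)) y).
    { cbn. simpl_unpair. intros ef eg m K Hf Hg'.
      eapply reach_trans.
      - replace (S n + m) with (n + S m) by lia. apply Hrec; assumption.
      - apply reach_step. rewrite step_ret_rec_S. apply Hg. exact Hg'. }
    split; [apply reaches_CRec|]; exact Ht.
  - intros f x y _ Hmu. split; [apply reaches_CMu|exact I]. exact Hmu.
  - intros f x k _ [Hf _] ef K Hef.
    eapply reach_trans; [apply Hf; exact Hef|].
    apply reach_step. rewrite step_ret_mu_0. apply reach_refl.
  - intros f x k v y _ [Hf _] _ Hmu ef K Hef.
    eapply reach_trans; [apply Hf; exact Hef|].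
    apply reach_step. rewrite step_ret_mu_S. apply Hmu. exact Hef.
Qed.

Inductive rec_steps (g a : nat) : nat -> nat -> nat -> nat -> Prop :=
| rec_steps_0 i z : rec_steps g a i z 0 z
| rec_steps_S i z m z' w :
    eval (decode g) (cpair a (cpair i z)) z' -> rec_steps g a (S i) z' m w ->
    rec_steps g a i z (S m) w.

Inductive mu_resume (f x k : nat) : nat -> nat -> Prop :=
| mu_resume_0 : mu_resume f x k 0 k
| mu_resume_S v r : mu_search (decode f) x (S k) r -> mu_resume f x k (S v) r.

Inductive cont_sem : nat -> nat -> nat -> Prop :=
| cont_sem_nil p K v : cont_sem (frame 0 p K) v v
| cont_sem_comp f K v w y :
    eval (decode f) v w -> cont_sem K w y -> cont_sem (k_comp f K) v y
| cont_sem_pair1 g x K v z y :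
    eval (decode g) x z -> cont_sem K (cpair v z) y -> cont_sem (k_pair1 g x K) v y
| cont_sem_pair2 y0 K z y : cont_sem K (cpair y0 z) y -> cont_sem (k_pair2 y0 K) z y
| cont_sem_rec g a i m K z w y :
    rec_steps g a i z m w -> cont_sem K w y -> cont_sem (k_rec g a i m K) z y
| cont_sem_mu f x k K v r y :
    mu_resume f x k v r -> cont_sem K r y -> cont_sem (k_mu f x k K) v y.

Ltac invert_cont H :=
  inversion H; subst;
  unfold k_comp, k_pair1, k_pair2, k_rec, k_mu, frame in *;
  repeat match goal with
  | E : cpair _ _ = cpair _ _ |- _ => apply cpair_inj in E as [? ?]
  end; subst; try discriminate; eauto.

Lemma cont_sem_comp_inv f K v y : cont_sem (k_comp f K) v y ->
  exists w, eval (decode f) v w /\ cont_sem K w y.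
Proof. intro H. invert_cont H. Qed.

Lemma cont_sem_pair1_inv g x K v y : cont_sem (k_pair1 g x K) v y ->
  exists z, eval (decode g) x z /\ cont_sem K (cpair v z) y.
Proof. intro H. invert_cont H. Qed.

Lemma cont_sem_pair2_inv y0 K z y : cont_sem (k_pair2 y0 K) z y -> cont_sem K (cpair y0 z) y.
Proof. intro H. invert_cont H. Qed.

Lemma cont_sem_rec_inv g a i m K z y : cont_sem (k_rec g a i m K) z y ->
  exists w, rec_steps g a i z m w /\ cont_sem K w y.
Proof. intro H. invert_cont H. Qed.

Lemma cont_sem_mu_inv f x k K v y : cont_sem (k_mu f x k K) v y ->
  exists r, mu_resume f x k v r /\ cont_sem K r y.
Proof. intro H. invert_cont H. Qed.

(* [state_sem st y]: the computation encoded by st can return y.  Since step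
   reflects it, soundness follows by running back from a halted state. *)
Definition state_sem (st y : nat) : Prop :=
  let r := snd (unpair st) in
  match fst (unpair st) with
  | 0 => exists v, eval (decode (fst (unpair r))) (fst (unpair (snd (unpair r)))) v /\
                   cont_sem (snd (unpair (snd (unpair r)))) v y
  | S _ => cont_sem (snd (unpair r)) (fst (unpair r)) y
  end.

Lemma state_sem_eval e x K y :
  state_sem (st_eval e x K) y <-> exists v, eval (decode e) x v /\ cont_sem K v y.
Proof. unfold state_sem, st_eval. simpl_unpair. reflexivity. Qed.

Lemma state_sem_ret m v K y : state_sem (st_ret_at m v K) y <-> cont_sem K v y.
Proof. unfold state_sem, st_ret_at. simpl_unpair. reflexivity. Qed.

Lemma rec_steps_eval f g a i z m w :
  eval (CRec f (decode g)) (cpair a i) z -> rec_steps g a i z m w ->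
  eval (CRec f (decode g)) (cpair a (i + m)) w.
Proof.
  intros H1 H2. induction H2 as [|i z m z' w Hg _ IH].
  - rewrite Nat.add_0_r. exact H1.
  - replace (i + S m) with (S i + m) by lia. apply IH. econstructor; eauto.
Qed.

Lemma mu_resume_search f x k v r :
  eval (decode f) (cpair x k) v -> mu_resume f x k v r -> mu_search (decode f) x k r.
Proof. intros H1 H2. destruct H2; econstructor; eauto. Qed.

Lemma state_sem_step_eval e x K y :
  state_sem (step (st_eval e x K)) y -> state_sem (st_eval e x K) y.
Proof.
  rewrite step_eval, state_sem_eval, (decode_unfold e). unfold decode_node.
  pose proof (Nat.mod_upper_bound e 8 ltac:(lia)) as Hlt.
  destruct (e mod 8) as [|[|[|[|[|[|[|[|]]]]]]]]; try lia; cbv zeta iota;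
    rewrite ?state_sem_ret, ?state_sem_eval.
  1-4: intro H; eexists; split; [constructor|exact H].
  - intros (v & Hv & (w & Hw & HK)%cont_sem_comp_inv). eexists; split; [|exact HK].
    econstructor; eauto.
  - intros (v & Hv & (w & Hw & HK)%cont_sem_pair1_inv). eexists; split; [|exact HK].
    econstructor; eauto.
  - intros (v & Hv & (w & Hw & HK)%cont_sem_rec_inv). eexists; split; [|exact HK].
    rewrite <- (cpair_unpair x). eapply (rec_steps_eval _ _ _ 0); [constructor|]; eauto.
  - intros (v & Hv & (w & Hw & HK)%cont_sem_mu_inv). eexists; split; [|exact HK].
    constructor. eapply mu_resume_search; eauto.
Qed.

Lemma state_sem_step_ret m v K y :
  state_sem (step (st_ret_at m v K)) y -> state_sem (st_ret_at m v K) y.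
Proof.
  destruct (cpair_surj K) as (t & K1 & ->). destruct (cpair_surj K1) as (p & K' & ->).
  fold (frame t p K').
  destruct (Nat.lt_ge_cases 0 t) as [Ht0|Ht0]; [destruct (Nat.lt_ge_cases t 6) as [Ht6|Ht6]|];
    [|rewrite step_stuck by lia; auto..].
  rewrite state_sem_ret.
  destruct t as [|[|[|[|[|[|]]]]]]; try lia.
  - fold (k_comp p K'). rewrite step_ret_comp, state_sem_eval.
    intros (w & Hw & HK). eapply cont_sem_comp; eauto.
  - destruct (cpair_surj p) as (g & x & ->). fold (k_pair1 g x K').
    rewrite step_ret_pair1, state_sem_eval.
    intros (w & Hw & HK%cont_sem_pair2_inv). eapply cont_sem_pair1; eauto.
  - fold (k_pair2 p K'). rewrite step_ret_pair2, state_sem_ret.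
    intro HK. apply cont_sem_pair2. exact HK.
  - destruct (cpair_surj p) as (g & p1 & ->). destruct (cpair_surj p1) as (a & p2 & ->).
    destruct (cpair_surj p2) as (i & [|n] & ->).
    + fold (k_rec g a i 0 K'). rewrite step_ret_rec_0, state_sem_ret.
      intro HK. eapply cont_sem_rec; [constructor|exact HK].
    + fold (k_rec g a i (S n) K'). rewrite step_ret_rec_S, state_sem_eval.
      intros (w & Hw & (w' & Hr & HK)%cont_sem_rec_inv). eapply cont_sem_rec; [|exact HK].
      econstructor; eauto.
  - destruct (cpair_surj p) as (f & p1 & ->). destruct (cpair_surj p1) as (x & k & ->).
    fold (k_mu f x k K'). destruct v as [|v].
    + rewrite step_ret_mu_0, state_sem_ret. intro HK. eapply cont_sem_mu; [constructor|exact HK].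
    + rewrite step_ret_mu_S, state_sem_eval.
      intros (w & Hw & (r & Hr & HK)%cont_sem_mu_inv). eapply cont_sem_mu; [|exact HK].
      constructor. eapply mu_resume_search; eauto.
Qed.

Lemma state_sem_step st y : state_sem (step st) y -> state_sem st y.
Proof.
  destruct (cpair_surj st) as ([|m] & r & ->).
  - destruct (cpair_surj r) as (e & r1 & ->). destruct (cpair_surj r1) as (x & K & ->).
    apply state_sem_step_eval.
  - destruct (cpair_surj r) as (v & K & ->). apply state_sem_step_ret.
Qed.

Definition halted (st : nat) : Prop :=
  fst (unpair st) <> 0 /\ fst (unpair (snd (unpair (snd (unpair st))))) = 0.

Lemma halted_inv st : halted st -> exists m v p K, st = st_ret_at m v (frame 0 p K).
Proof.
  intros [H1 H2]. destruct (cpair_surj st) as ([|m] & r & ->); simpl_unpair_in H1;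
    [congruence|].
  destruct (cpair_surj r) as (v & K & ->). destruct (cpair_surj K) as (t & K1 & ->).
  destruct (cpair_surj K1) as (p & K' & ->). simpl_unpair_in H2. subst.
  exists m, v, p, K'. reflexivity.
Qed.

Lemma halted_state_sem st : halted st -> state_sem st (fst (unpair (snd (unpair st)))).
Proof.
  intros (m & v & p & K & ->)%halted_inv. rewrite state_sem_ret.
  unfold st_ret_at. simpl_unpair. constructor.
Qed.

Lemma halted_step st : halted st -> step st = st.
Proof. intros (m & v & p & K & ->)%halted_inv. apply step_stuck. auto. Qed.

Lemma halted_iter_mono s s' st : s <= s' ->
  halted (Nat.iter s step st) -> halted (Nat.iter s' step st).
Proof.
  intros Hle H. replace s' with ((s' - s) + s) by lia. rewrite Nat.iter_add.
  induction (s' - s) as [|d IH]; [exact H|]. rewrite Nat.iter_succ, halted_step; auto.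
Qed.

Lemma state_sem_iter s st y : state_sem (Nat.iter s step st) y -> state_sem st y.
Proof.
  revert st. induction s as [|s IH]; intros st H; [exact H|].
  apply state_sem_step, IH. rewrite <- Nat.iter_succ_r. exact H.
Qed.

Lemma W_iff_halts e x : W e x <-> exists s, halted (Nat.iter s step (st_eval e x 0)).
Proof.
  split.
  - intros [y Hy]. destruct (eval_reaches _ _ _ Hy) as [Hr _].
    destruct (Hr e 0 eq_refl) as [s Hs]. exists s. rewrite Hs.
    unfold halted, st_ret_at. simpl_unpair. split; [lia|reflexivity].
  - intros [s Hs%halted_state_sem%state_sem_iter].
    apply state_sem_eval in Hs as (v & Hv & _). exists v. exact Hv.
Qed.

(** * Parametrization *)

Definition search_code (c : expr) (n : nat) : code :=
  CComp (CMu (compile c)) (CPair (compile (Num n)) code_id).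

Lemma W_search_code c n x :
  W (encode (search_code c n)) x <-> exists k, den c (cpair (cpair n x) k) = 0.
Proof.
  unfold W, phi. rewrite decode_encode, <- (eval_CMu_iff _ _ _ (eval_compile c)).
  assert (Hin : eval (CPair (compile (Num n)) code_id) x (cpair n x)).
  { constructor; [rewrite <- (den_Num n x) at 2; apply eval_compile|apply eval_id]. }
  split.
  - intros [y Hy]. inversion Hy as [| | | |? ? ? z ? Hz Hmu| | | |]; subst.
    rewrite (eval_det _ _ _ _ Hz Hin) in Hmu. eauto.
  - intros [y Hy]. exists y. econstructor; eauto.
Qed.

Definition Code8 (r : nat) (a : expr) : expr :=
  let a2 := Plus a a in
  let a4 := Plus a2 a2 in
  Plus (Plus a4 a4) (Num r).

Lemma den_Code8 r a x : den (Code8 r a) x = 8 * den a x + r.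
Proof. unfold Code8. rewrite !den_Plus, den_Num. lia. Qed.

Definition EncodeNum : expr := Iter (Code8 4 (Pair (Num 1) (Snd Var))) Zero Var.

Lemma den_EncodeNum n : den EncodeNum n = encode (compile (Num n)).
Proof.
  unfold EncodeNum.
  rewrite (den_Iter _ _ _ _ (fun st => 8 * cpair 1 st + 4))
    by (intro; rewrite den_Code8; cbn [den]; rewrite den_Num; simpl_unpair; reflexivity).
  cbn [den]. induction n as [|n IH]; [reflexivity|].
  rewrite Nat.iter_succ, IH. reflexivity.
Qed.

Lemma computable_search_code c : computable (fun n => encode (search_code c n)).
Proof.
  set (E := Code8 4 (Pair (Num (encode (CMu (compile c))))
                          (Code8 5 (Pair EncodeNum (Num (encode code_id)))))).
  exists (encode (compile E)). intro n. unfold phi. rewrite decode_encode.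
  replace (encode (search_code c n)) with (den E n); [apply eval_compile|].
  unfold E. rewrite den_Code8. cbn [den]. rewrite den_Code8. cbn [den].
  rewrite !den_Num, den_EncodeNum. reflexivity.
Qed.

(** * Paths and closures *)

Fixpoint chain (R : nat -> nat -> Prop) (a : nat) (l : list nat) (b : nat) : Prop :=
  match l with
  | [] => R a b
  | h :: t => R a h /\ chain R h t b
  end.

Definition TC (R : nat -> nat -> Prop) (a b : nat) : Prop := exists l, chain R a l b.

Definition has_cycle (R : nat -> nat -> Prop) : Prop :=
  exists a b, a <> b /\ TC R a b /\ TC R b a.

Lemma chain_app R a l1 x l2 b :
  chain R a (l1 ++ x :: l2) b <-> chain R a l1 x /\ chain R x l2 b.
Proof. revert a. induction l1 as [|h t IH]; intro a; cbn; [|rewrite IH]; tauto. Qed.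

Lemma chain_mono (R S : nat -> nat -> Prop) a l b :
  (forall u v, R u v -> S u v) -> chain R a l b -> chain S a l b.
Proof. intro HRS. revert a. induction l as [|h t IH]; cbn; intuition. Qed.

Lemma chain_transitive R a l b : transitive_rel R -> chain R a l b -> R a b.
Proof. intro HT. revert a. induction l as [|h t IH]; cbn; [auto|]. intros a [H1 H2]. eauto. Qed.

Lemma chain_NoDup R a l b : chain R a l b -> exists l', chain R a l' b /\ NoDup l'.
Proof.
  remember (length l) as m eqn:Hm. revert a l b Hm.
  induction m as [m IH] using lt_wf_ind. intros a l b -> H.
  destruct (NoDup_dec Nat.eq_dec l) as [Hn|Hn]; [eauto|].
  apply (not_NoDup (fun x y => Nat.eq_decidable x y)) in Hn as (x & l1 & l2 & l3 & ->).
  apply chain_app in H as [H1 H2]. apply chain_app in H2 as [_ H3].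
  apply (IH (length (l1 ++ x :: l3))) with (l := l1 ++ x :: l3); [|reflexivity|].
  - rewrite !length_app. cbn. rewrite length_app. cbn. lia.
  - apply chain_app. auto.
Qed.

Lemma chain_bounded (R : nat -> nat -> Prop) s a l b :
  (forall u v, R u v -> u <= s /\ v <= s) -> chain R a l b ->
  a <= s /\ b <= s /\ Forall (fun z => z <= s) l.
Proof.
  intro HR. revert a. induction l as [|h t IH]; intros a; cbn.
  - intros H%HR. intuition.
  - intros [H1%HR H2%IH]. intuition.
Qed.

Lemma TC_trans R : transitive_rel (TC R).
Proof. intros a b c [l1 H1] [l2 H2]. exists (l1 ++ b :: l2). apply chain_app. auto. Qed.

Lemma TC_mono (R S : nat -> nat -> Prop) a b :
  (forall u v, R u v -> S u v) -> TC R a b -> TC S a b.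
Proof. intros HRS [l H]. exists l. eapply chain_mono; eauto. Qed.

Lemma TC_rel_eq R S : rel_eq R S -> rel_eq (TC R) (TC S).
Proof. intros H a b. split; apply TC_mono; firstorder. Qed.

Lemma TC_of_transitive R : transitive_rel R -> rel_eq R (TC R).
Proof.
  intros HT a b. split; [intro H; exists []; exact H|].
  intros [l H]. eapply chain_transitive; eauto.
Qed.

Definition RTC (R : nat -> nat -> Prop) (a b : nat) : Prop := a = b \/ TC R a b.

Lemma RTC_refl R : reflexive_rel (RTC R).
Proof. left. reflexivity. Qed.

Lemma RTC_trans R : transitive_rel (RTC R).
Proof.
  intros a b c [<-|H1] [<-|H2]; [left; reflexivity|right..]; auto.
  eapply TC_trans; eauto.
Qed.

Lemma RTC_rel_eq R S : rel_eq R S -> rel_eq (RTC R) (RTC S).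
Proof. intros H a b. unfold RTC. rewrite (TC_rel_eq _ _ H a b). reflexivity. Qed.

Lemma RTC_of_preorder R : reflexive_rel R -> transitive_rel R -> rel_eq R (RTC R).
Proof.
  intros HR HT a b. unfold RTC. rewrite <- (TC_of_transitive _ HT a b).
  split; [auto|intros [<-|H]; auto].
Qed.

Lemma reflexive_rel_iff R S : rel_eq R S -> reflexive_rel R <-> reflexive_rel S.
Proof. intro H. split; intros HR a; apply H, HR. Qed.

Lemma transitive_rel_iff R S : rel_eq R S -> transitive_rel R <-> transitive_rel S.
Proof.
  intro H. split; intros HT a b c H1 H2; apply H; apply H in H1, H2; eauto.
Qed.

Lemma antisymmetric_rel_iff R S : rel_eq R S -> antisymmetric_rel R <-> antisymmetric_rel S.
Proof. intro H. split; intros HA a b H1 H2; apply H in H1, H2; eauto. Qed.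

Section Stages.

Variable R : nat -> nat -> nat -> Prop.
Hypothesis R_mono : forall s s' u v, s <= s' -> R s u v -> R s' u v.

Lemma TC_stage_mono s s' a b : s <= s' -> TC (R s) a b -> TC (R s') a b.
Proof. intro Hs. apply TC_mono. eauto. Qed.

Definition stages_union (u v : nat) : Prop := exists s, R s u v.

Lemma TC_stages_union a b : TC stages_union a b <-> exists s, TC (R s) a b.
Proof.
  split.
  - intros [l H]. revert a H. induction l as [|h t IH]; intros a H.
    + destruct H as [s H]. exists s, []. exact H.
    + destruct H as [[s1 H1] (s2 & H2)%IH]. exists (Nat.max s1 s2).
      apply (TC_trans _ _ h); [exists []; cbn|]; eauto using TC_stage_mono with arith.
  - intros (s & H). eapply TC_mono; [|exact H]. intros u v Huv. exists s. exact Huv.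
Qed.

Definition acyclic_closure (a b : nat) : Prop :=
  a = b \/ exists s, TC (R s) a b /\ ~ has_cycle (R s).

Lemma acyclic_closure_refl : reflexive_rel acyclic_closure.
Proof. left. reflexivity. Qed.

Lemma acyclic_closure_trans : transitive_rel acyclic_closure.
Proof.
  intros a b c [<-|(s1 & H1 & N1)]; [auto|]. intros [<-|(s2 & H2 & N2)]; [right; eauto|].
  right. destruct (Nat.le_ge_cases s1 s2) as [Hs|Hs]; [exists s2|exists s1];
    split; auto; eapply TC_trans; eauto using TC_stage_mono.
Qed.

Lemma acyclic_closure_antisym : antisymmetric_rel acyclic_closure.
Proof.
  intros a b [<-|(s1 & H1 & N1)]; [auto|]. intros [<-|(s2 & H2 & N2)]; [auto|].
  destruct (Nat.eq_dec a b) as [|Hab]; [assumption|exfalso].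
  destruct (Nat.le_ge_cases s1 s2) as [Hs|Hs];
    [apply N2|apply N1]; exists a, b; repeat split; eauto using TC_stage_mono.
Qed.

Lemma acyclic_closure_of_order :
  reflexive_rel stages_union -> transitive_rel stages_union -> antisymmetric_rel stages_union ->
  rel_eq stages_union acyclic_closure.
Proof.
  intros HR HT HA a b.
  assert (HTC : forall s u v, TC (R s) u v -> stages_union u v)
    by (intros s u v H; apply (TC_of_transitive _ HT); eapply TC_mono; [|exact H];
        intros; exists s; assumption).
  split.
  - intros [s H]. right. exists s. split; [exists []; exact H|].
    intros (u & v & Huv & H1 & H2). eauto.
  - intros [<-|(s & H & _)]; eauto.
Qed.

End Stages.

(** * Finite stages of V_n *)

Definition stage (n s a b : nat) : Prop :=
  a <= s /\ b <= s /\ halted (Nat.iter s step (st_eval n (cpair a b) 0)).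

Lemma stage_mono n s s' a b : s <= s' -> stage n s a b -> stage n s' a b.
Proof.
  intros Hs (Ha & Hb & H). split; [lia|split; [lia|]]. eapply halted_iter_mono; eauto.
Qed.

Lemma V_stages_union n : rel_eq (V n) (stages_union (stage n)).
Proof.
  intros a b. unfold V, stages_union. rewrite W_iff_halts. split.
  - intros [s H]. exists (Nat.max s (Nat.max a b)). split; [lia|split; [lia|]].
    eapply halted_iter_mono; [|exact H]. lia.
  - intros (s & _ & _ & H). eauto.
Qed.

Definition Run (s st : expr) : expr := Iter (Comp step_expr (Snd Var)) st s.

Lemma den_Run s st x : den (Run s st) x = Nat.iter (den s x) step (den st x).
Proof. apply den_Iter. intro. cbn [den]. simpl_unpair. reflexivity. Qed.

Definition Halted (st : expr) : expr := And (Not (Fst st)) (Fst (Snd (Snd st))).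

Lemma den_Halted st x : den (Halted st) x = 0 <-> halted (den st x).
Proof. unfold Halted. rewrite den_And, den_Not. reflexivity. Qed.

Definition Stage (n s a b : expr) : expr :=
  And (Minus a s) (And (Minus b s) (Halted (Run s (EvalSt n (Pair a b) Zero)))).

Lemma den_Stage n s a b x :
  den (Stage n s a b) x = 0 <-> stage (den n x) (den s x) (den a x) (den b x).
Proof.
  unfold Stage, stage. rewrite !den_And, !den_Minus, den_Halted, den_Run.
  rewrite !Nat.sub_0_le. reflexivity.
Qed.

Fixpoint encode_list (l : list nat) : nat :=
  match l with [] => 0 | h :: t => S (cpair h (encode_list t)) end.

Lemma encode_list_surj L : exists l, encode_list l = L.
Proof.
  induction L as [[|L] IH] using lt_wf_ind; [exists []; reflexivity|].
  destruct (IH (snd (unpair L))) as [t Ht]; [pose proof (unpair_le L); lia|].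
  exists (fst (unpair L) :: t). cbn. rewrite Ht, cpair_unpair. reflexivity.
Qed.

Lemma length_le_encode_list l : length l <= encode_list l.
Proof. induction l as [|h t IH]; cbn; [lia|]. pose proof (cpair_le_r h (encode_list t)). lia. Qed.

Lemma encode_list_le_repeat s l :
  NoDup l -> Forall (fun z => z <= s) l -> encode_list l <= encode_list (repeat s (S s)).
Proof.
  intros Hn Hb.
  assert (Hlen : length l <= S s).
  { rewrite <- (length_seq (S s) 0). apply NoDup_incl_length; [exact Hn|].
    intros z Hz. apply in_seq. rewrite Forall_forall in Hb. specialize (Hb z Hz). lia. }
  transitivity (encode_list (repeat s (length l))).
  - clear Hn Hlen. induction Hb as [|h t Hh _ IH]; cbn; [lia|].
    apply le_n_S, cpair_le_mono; assumption.
  - induction Hlen as [|m _ IH]; [lia|]. cbn.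
    pose proof (cpair_le_r s (encode_list (repeat s m))). lia.
Qed.

Definition PathCheck (rel a L b : expr) : expr :=
  LetIn
    (Iter (let x := Fst Var in
           let st := Snd Var in
           let rest := Fst (Snd st) in
           let next := Fst (Pred rest) in
           IfZ rest st
             (Pair next (Pair (Snd (Pred rest))
                (And (Snd (Snd st)) (Comp rel (Pair x (Pair (Fst st) next)))))))
          (Pair a (Pair L Zero)) L)
    (And (Snd (Snd (Snd Var)))
         (Comp rel (Pair (Fst Var) (Pair (Fst (Snd Var)) (Comp b (Fst Var)))))).

Lemma den_PathCheck rel a L b x (R : nat -> nat -> Prop) l :
  (forall u v, den rel (cpair x (cpair u v)) = 0 <-> R u v) -> den L x = encode_list l ->
  den (PathCheck rel a L b) x = 0 <-> chain R (den a x) l (den b x).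
Proof.
  intros HR HL. unfold PathCheck. rewrite den_LetIn. cbn [den]. rewrite HL.
  match goal with |- context [Nat.iter _ ?g _] => set (G := g) end.
  assert (G_nil : forall cur f, G (cpair cur (cpair 0 f)) = cpair cur (cpair 0 f))
    by (intros; unfold G; cbn [den]; simpl_unpair; reflexivity).
  assert (G_cons : forall cur h t f, exists f',
    G (cpair cur (cpair (encode_list (h :: t)) f)) = cpair h (cpair (encode_list t) f') /\
    (f' = 0 <-> f = 0 /\ R cur h)).
  { intros. unfold G. cbn [den encode_list]. simpl_unpair.
    eexists. split; [reflexivity|]. rewrite den_And. cbn [den]. simpl_unpair.
    rewrite HR. reflexivity. }
  assert (Hloop : forall l k cur f, length l <= k -> exists cur' f',
    Nat.iter k G (cpair cur (cpair (encode_list l) f)) = cpair cur' (cpair 0 f') /\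
    forall b, f' = 0 /\ R cur' b <-> f = 0 /\ chain R cur l b).
  { induction l0 as [|h t IH]; intros k cur f Hk.
    - exists cur, f. split; [|reflexivity].
      induction k as [|k IHk]; [reflexivity|]. rewrite Nat.iter_succ, IHk; auto with arith.
    - destruct k as [|k]; [cbn in Hk; lia|].
      destruct (G_cons cur h t f) as (f1 & E1 & H1).
      destruct (IH k h f1) as (cur' & f' & E & H); [cbn in Hk; lia|].
      exists cur', f'. rewrite Nat.iter_succ_r, E1, E. split; [reflexivity|].
      intro b0. rewrite H, H1. cbn [chain]. tauto. }
  destruct (Hloop l (encode_list l) (den a x) 0 (length_le_encode_list l))
    as (cur' & f' & -> & H).
  rewrite den_And. cbn [den]. simpl_unpair. rewrite HR, H. intuition.
Qed.

Definition BoundedEx (bound P : expr) : expr :=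
  Snd (Iter (let q := Fst (Snd Var) in
             Pair (Succ q) (Or (Snd (Snd Var)) (Comp P (Pair (Fst Var) q))))
            (Pair Zero (Num 1)) (Succ bound)).

Lemma den_BoundedEx bound P x :
  den (BoundedEx bound P) x = 0 <-> exists q, q <= den bound x /\ den P (cpair x q) = 0.
Proof.
  unfold BoundedEx. cbn [den Num].
  match goal with |- context [Nat.iter _ ?g _] => set (G := g) end.
  assert (Hloop : forall k, exists f, Nat.iter k G (cpair 0 1) = cpair k f /\
                    (f = 0 <-> exists q, q < k /\ den P (cpair x q) = 0)).
  { induction k as [|k (f & E & H)].
    - exists 1. split; [reflexivity|]. split; [discriminate|]. intros (q & Hq & _). lia.
    - rewrite Nat.iter_succ, E. unfold G. cbn [den]. simpl_unpair.
      eexists. split; [reflexivity|]. rewrite den_Or. cbn [den]. simpl_unpair. rewrite H.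
      split.
      + intros [(q & Hq & Hp)|Hp]; [exists q|exists k]; split; auto with arith.
      + intros (q & Hq & Hp). destruct (Nat.eq_dec q k) as [->|Hqk]; [right; exact Hp|].
        left. exists q. split; [lia|exact Hp]. }
  destruct (Hloop (S (den bound x))) as (f & -> & H). simpl_unpair. rewrite H.
  split; intros (q & Hq & Hp); exists q; split; auto; lia.
Qed.

Definition RepeatList (s : expr) : expr :=
  Iter (Succ (Pair (Comp s (Fst Var)) (Snd Var))) Zero (Succ s).

Lemma den_RepeatList s x : den (RepeatList s) x = encode_list (repeat (den s x) (S (den s x))).
Proof.
  unfold RepeatList. rewrite (den_Iter _ _ _ _ (fun st => S (cpair (den s x) st)))
    by (intro; cbn [den]; simpl_unpair; reflexivity).
  cbn [den]. generalize (S (den s x)) as m. induction m as [|m IH]; [reflexivity|].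
  rewrite Nat.iter_succ, IH. reflexivity.
Qed.

Definition CycleWitness (rel : expr) : expr :=
  let rel' := Comp rel (Pair (Fst (Fst Var)) (Snd Var)) in
  let q := Snd Var in
  let a := Fst q in
  let b := Fst (Snd q) in
  And (Not (Equal a b))
      (And (PathCheck rel' a (Fst (Snd (Snd q))) b) (PathCheck rel' b (Snd (Snd (Snd q))) a)).

Lemma den_CycleWitness rel x (R : nat -> nat -> Prop) a b l1 l2 :
  (forall u v, den rel (cpair x (cpair u v)) = 0 <-> R u v) ->
  den (CycleWitness rel) (cpair x (cpair a (cpair b (cpair (encode_list l1) (encode_list l2)))))
    = 0 <-> a <> b /\ chain R a l1 b /\ chain R b l2 a.
Proof.
  intro HR.
  assert (HR' : forall q u v,
    den (Comp rel (Pair (Fst (Fst Var)) (Snd Var))) (cpair (cpair x q) (cpair u v)) = 0 <-> R u v)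
    by (intros; cbn [den]; simpl_unpair; apply HR).
  unfold CycleWitness. rewrite !den_And, den_Not, den_Equal,
    (den_PathCheck _ _ _ _ _ R l1 (HR' _)), (den_PathCheck _ _ _ _ _ R l2 (HR' _));
    cbn [den]; simpl_unpair; reflexivity.
Qed.

(* A cycle through two points of a relation on [0, s] has duplicate-free
   witnessing paths (chain_NoDup), whose codes are bounded by RepeatList s. *)
Definition CycleCheck (rel s : expr) : expr :=
  BoundedEx (Pair s (Pair s (Pair (RepeatList s) (RepeatList s)))) (CycleWitness rel).

Lemma den_CycleCheck rel s x (R : nat -> nat -> Prop) :
  (forall u v, den rel (cpair x (cpair u v)) = 0 <-> R u v) ->
  (forall u v, R u v -> u <= den s x /\ v <= den s x) ->
  den (CycleCheck rel s) x = 0 <-> has_cycle R.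
Proof.
  intros HR Hs. unfold CycleCheck. rewrite den_BoundedEx. cbn [den]. rewrite den_RepeatList.
  split.
  - intros (q & _ & Hq). destruct (cpair_surj q) as (a & q1 & ->).
    destruct (cpair_surj q1) as (b & q2 & ->). destruct (cpair_surj q2) as (L1 & L2 & ->).
    destruct (encode_list_surj L1) as (l1 & <-). destruct (encode_list_surj L2) as (l2 & <-).
    apply (den_CycleWitness _ _ _ _ _ _ _ HR) in Hq as (Hab & H1 & H2).
    exists a, b. split; [|split]; [exact Hab|exists l1; exact H1|exists l2; exact H2].
  - intros (a & b & Hab & (l1 & H1) & (l2 & H2)).
    destruct (chain_NoDup _ _ _ _ H1) as (l1' & H1' & N1).
    destruct (chain_NoDup _ _ _ _ H2) as (l2' & H2' & N2).
    destruct (chain_bounded _ _ _ _ _ Hs H1') as (Ha & Hb & B1).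
    destruct (chain_bounded _ _ _ _ _ Hs H2') as (_ & _ & B2).
    exists (cpair a (cpair b (cpair (encode_list l1') (encode_list l2')))). split.
    + repeat apply cpair_le_mono; auto using encode_list_le_repeat.
    + apply (den_CycleWitness _ _ _ _ _ _ _ HR). auto.
Qed.

(** * Uniformization *)

Lemma V_search_code c n i j : V (encode (search_code c n)) i j <->
  exists s l, den c (cpair (cpair n (cpair i j)) (cpair s (encode_list l))) = 0.
Proof.
  unfold V. rewrite W_search_code. split; [|intros (s & l & H); eauto].
  intros [k H]. destruct (cpair_surj k) as (s & L & ->).
  destruct (encode_list_surj L) as (l & <-). eauto.
Qed.

(* The checkers read <<n,<i,j>>,<s,L>>, L coding the intermediate points of a
   path; stage_rel reads <<<n,<i,j>>,<s,L>>,<u,v>>. *)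
Definition stage_rel : expr :=
  Stage (Fst (Fst (Fst Var))) (Fst (Snd (Fst Var))) (Fst (Snd Var)) (Snd (Snd Var)).

Lemma den_stage_rel n ij s L u v :
  den stage_rel (cpair (cpair (cpair n ij) (cpair s L)) (cpair u v)) = 0 <-> stage n s u v.
Proof. unfold stage_rel. rewrite den_Stage. cbn [den]. simpl_unpair. reflexivity. Qed.

Definition path_check : expr :=
  PathCheck stage_rel (Fst (Snd (Fst Var))) (Snd (Snd Var)) (Snd (Snd (Fst Var))).

Definition refl_path_check : expr :=
  Or (Equal (Fst (Snd (Fst Var))) (Snd (Snd (Fst Var)))) path_check.

Definition order_check : expr :=
  Or (Equal (Fst (Snd (Fst Var))) (Snd (Snd (Fst Var))))
     (And path_check (Not (CycleCheck stage_rel (Fst (Snd Var))))).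

Lemma den_path_check n i j s l :
  den path_check (cpair (cpair n (cpair i j)) (cpair s (encode_list l))) = 0 <->
  chain (stage n s) i l j.
Proof.
  unfold path_check. rewrite (den_PathCheck _ _ _ _ _ (stage n s) l).
  - cbn [den]. simpl_unpair. reflexivity.
  - intros. apply den_stage_rel.
  - cbn [den]. simpl_unpair. reflexivity.
Qed.

Lemma den_refl_path_check n i j s l :
  den refl_path_check (cpair (cpair n (cpair i j)) (cpair s (encode_list l))) = 0 <->
  i = j \/ chain (stage n s) i l j.
Proof.
  unfold refl_path_check. rewrite den_Or, den_Equal, den_path_check.
  cbn [den]. simpl_unpair. reflexivity.
Qed.

Lemma den_order_check n i j s l :
  den order_check (cpair (cpair n (cpair i j)) (cpair s (encode_list l))) = 0 <->
  i = j \/ chain (stage n s) i l j /\ ~ has_cycle (stage n s).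
Proof.
  unfold order_check. rewrite den_Or, den_Equal, den_And, den_Not, den_path_check.
  rewrite (den_CycleCheck _ _ _ (stage n s)).
  - cbn [den]. simpl_unpair. reflexivity.
  - intros. apply den_stage_rel.
  - cbn [den]. simpl_unpair. intros u v (Hu & Hv & _). auto.
Qed.

Definition tc_index (n : nat) : nat := encode (search_code path_check n).
Definition rtc_index (n : nat) : nat := encode (search_code refl_path_check n).
Definition order_index (n : nat) : nat := encode (search_code order_check n).

Lemma V_tc_index n : rel_eq (V (tc_index n)) (TC (V n)).
Proof.
  intros i j. unfold tc_index. rewrite V_search_code.
  rewrite (TC_rel_eq _ _ (V_stages_union n) i j), TC_stages_union by apply stage_mono.
  split; [intros (s & l & H%den_path_check); exists s, l; exact H|].
  intros (s & l & H). exists s, l. apply den_path_check, H.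
Qed.

Lemma V_rtc_index n : rel_eq (V (rtc_index n)) (RTC (V n)).
Proof.
  intros i j. unfold rtc_index, RTC. rewrite V_search_code.
  rewrite (TC_rel_eq _ _ (V_stages_union n) i j), TC_stages_union by apply stage_mono.
  split.
  - intros (s & l & [->|H]%den_refl_path_check); [left; reflexivity|right].
    exists s, l. exact H.
  - intros [<-|(s & l & H)].
    + exists 0, []. apply den_refl_path_check. auto.
    + exists s, l. apply den_refl_path_check. auto.
Qed.

Lemma V_order_index n : rel_eq (V (order_index n)) (acyclic_closure (stage n)).
Proof.
  intros i j. unfold order_index, acyclic_closure. rewrite V_search_code.
  split.
  - intros (s & l & [->|[H N]]%den_order_check); [left; reflexivity|right].
    exists s. split; [exists l|]; assumption.
  - intros [<-|(s & (l & H) & N)].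
    + exists 0, []. apply den_order_check. auto.
    + exists s, l. apply den_order_check. auto.
Qed.

Lemma transitive_uniformization :
  exists t : nat -> nat, computable t /\
    forall m n : nat,
      in_T (t n) /\
      (in_T n -> rel_eq (V n) (V (t n))) /\
      (rel_eq (V m) (V n) -> rel_eq (V (t m)) (V (t n))).
Proof.
  exists tc_index. split; [apply computable_search_code|]. intros m n. split; [|split].
  - unfold in_T. rewrite (transitive_rel_iff _ _ (V_tc_index n)). apply TC_trans.
  - intros HT i j. rewrite (V_tc_index n i j). apply TC_of_transitive, HT.
  - intros HE i j. rewrite (V_tc_index m i j), (V_tc_index n i j). apply TC_rel_eq, HE.
Qed.

Lemma preorder_uniformization :
  exists p : nat -> nat, computable p /\
    forall m n : nat,
      in_P (p n) /\
      (in_P n -> rel_eq (V n) (V (p n))) /\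
      (rel_eq (V m) (V n) -> rel_eq (V (p m)) (V (p n))).
Proof.
  exists rtc_index. split; [apply computable_search_code|]. intros m n. split; [|split].
  - unfold in_P. rewrite (reflexive_rel_iff _ _ (V_rtc_index n)),
      (transitive_rel_iff _ _ (V_rtc_index n)). split; [apply RTC_refl|apply RTC_trans].
  - intros [HR HT] i j. rewrite (V_rtc_index n i j). apply RTC_of_preorder; assumption.
  - intros HE i j. rewrite (V_rtc_index m i j), (V_rtc_index n i j). apply RTC_rel_eq, HE.
Qed.

Lemma partial_order_uniformization :
  exists o : nat -> nat, computable o /\
    forall n : nat, in_O (o n) /\ (in_O n -> rel_eq (V n) (V (o n))).
Proof.
  exists order_index. split; [apply computable_search_code|]. intro n.
  pose proof (V_order_index n) as Ho. pose proof (V_stages_union n) as Hs.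
  unfold in_O. split.
  - rewrite (reflexive_rel_iff _ _ Ho), (transitive_rel_iff _ _ Ho),
      (antisymmetric_rel_iff _ _ Ho).
    split; [|split]; [apply acyclic_closure_refl|apply acyclic_closure_trans, stage_mono
                     |apply acyclic_closure_antisym, stage_mono].
  - rewrite (reflexive_rel_iff _ _ Hs), (transitive_rel_iff _ _ Hs),
      (antisymmetric_rel_iff _ _ Hs).
    intros (HR & HT & HA) i j. rewrite (Ho i j), (Hs i j).
    apply acyclic_closure_of_order; assumption.
Qed.

Theorem proposition16 :
  (exists t : nat -> nat, computable t /\
     forall m n : nat,
       in_T (t n) /\
       (in_T n -> rel_eq (V n) (V (t n))) /\
       (rel_eq (V m) (V n) -> rel_eq (V (t m)) (V (t n)))) /\
  (exists p : nat -> nat, computable p /\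
     forall m n : nat,
       in_P (p n) /\
       (in_P n -> rel_eq (V n) (V (p n))) /\
       (rel_eq (V m) (V n) -> rel_eq (V (p m)) (V (p n)))) /\
  (exists o : nat -> nat, computable o /\
     forall n : nat,
       in_O (o n) /\
       (in_O n -> rel_eq (V n) (V (o n)))).
Proof.
  exact (conj transitive_uniformization
          (conj preorder_uniformization partial_order_uniformization)).
Qed.
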